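(* Consider the Truthful Interval Covering setting with $n$ agents and unit-length intervals. Let $\mathcal{M}$ be a deterministic truthful mechanism, $\mathcal{I}$ an instance and $i$ an agent such that $I_i\cap\mathcal{M}(\mathcal{I})$ has positive length. Let $I_i'$ be a unit interval such that $I_i'\cap I_i\cap \mathcal{M}(\mathcal{I})$ has positive length, and let $\mathcal{I}'=(I_i',\mathcal{I}_{-i})$. Then $I_i'\cap \mathcal{M}(\mathcal{I}')$ has positive length.
   Context: There are $n$ agents; agent $i$ has an interval $I_i=[s_i,s_i+1]$ of length $1$; an instance is $\mathcal{I}=(I_1,\dots,I_n)$ and $\mathcal{I}_{-i}$ denotes the intervals of all agents other than $i$. A deterministic mechanism maps each reported instance to a unit covering interval $\mathcal{M}(\mathcal{I})$. Agent $i$'s cost is $\mathrm{cost}_i(C)=1-|I_i\cap C|$ ($|\cdot|$ = length). $\mathcal{M}$ is truthful if for every instance $\mathcal{I}$, agent $i$ and misreport $I_i'$, $\mathrm{cost}_i(\mathcal{M}(\mathcal{I}))\le\mathrm{cost}_i(\mathcal{M}(I_i',\mathcal{I}_{-i}))$. *)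

From mathcomp Require Import all_boot all_order all_algebra.
From mathcomp Require Import reals.
Set Implicit Arguments. Unset Strict Implicit. Unset Printing Implicit Defensive.
Import Order.TTheory GRing.Theory Num.Theory.
Local Open Scope ring_scope.

Section Defs.
Variable R : realType.

(* A unit interval [s, s+1] is represented by its left endpoint s. *)
Definition ilen (a b c d : R) : R := Num.max 0 (Num.min b d - Num.max a c).

Definition ov2 (s t : R) : R := ilen s (s + 1) t (t + 1).

Definition ov3 (s t u : R) : R :=
  Num.max 0 (Num.min (s + 1) (Num.min (t + 1) (u + 1)) - Num.max s (Num.max t u)).

Definition instance (n : nat) := 'I_n -> R.

(* A deterministic mechanism: maps an instance to the left endpoint of the
   unit covering interval. *)
Definition mechanism (n : nat) := instance n -> R.

Definition upd (n : nat) (I : instance n) (i : 'I_n) (s' : R) : instance n :=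
  fun j => if j == i then s' else I j.

Definition cost (s c : R) : R := 1 - ov2 s c.

Definition truthful (n : nat) (M : mechanism n) : Prop :=
  forall (I : instance n) (i : 'I_n) (s' : R),
    cost (I i) (M I) <= cost (I i) (M (upd I i s')).
End Defs.

From mathcomp Require Import all_boot all_order all_algebra.
From mathcomp Require Import reals.
From Stdlib Require Import FunctionalExtensionality.
Import Order.TTheory GRing.Theory Num.Theory.
Local Open Scope ring_scope.

(* Apply truthfulness to the agent whose true interval is I_i' in the
   instance I', misreporting I_i: this yields I'.  So the overlap of I_i'
   with M(I') is at least its overlap with M(I), which is positive because
   I_i' already meets I_i ∩ M(I) in positive length. *)

Section Overlap.
Set Implicit Arguments.
Variables (R : realType) (n : nat).

Lemma ov3_gt0_ov2 (s t u : R) : 0 < ov3 s t u -> 0 < ov2 s u.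
Proof.
rewrite /ov3 /ov2 /ilen !lt_max ltxx /= !subr_gt0 !lt_min !gt_max.
by case/and5P => /and3P[-> _ ->] _ -> _ ->.
Qed.

Lemma upd_upd (I : instance R n) (i : 'I_n) (a b : R) :
  upd (upd I i a) i b = upd I i b.
Proof. by apply: functional_extensionality => j; rewrite /upd; case: eqP. Qed.

Lemma upd_id (I : instance R n) (i : 'I_n) : upd I i (I i) = I.
Proof.
by apply: functional_extensionality => j; rewrite /upd; case: eqP => [->|].
Qed.

Lemma upd_eq (I : instance R n) (i : 'I_n) (s : R) : upd I i s i = s.
Proof. by rewrite /upd eqxx. Qed.

Lemma truthful_ov2_le (M : mechanism R n) (I : instance R n) (i : 'I_n) (s : R) :
  truthful M -> ov2 (I i) (M (upd I i s)) <= ov2 (I i) (M I).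
Proof. by move=> /(_ I i s); rewrite /cost lerD2l lerN2. Qed.

End Overlap.

(* The hypothesis on ov2 (I i) (M I) is implied by the one on ov3. *)
Theorem lemma1 (R : realType) (n : nat) (M : mechanism R n)
  (I : instance R n) (i : 'I_n) (s' : R) :
  truthful M ->
  0 < ov2 (I i) (M I) ->
  0 < ov3 s' (I i) (M I) ->
  0 < ov2 s' (M (upd I i s')).
Proof.
move=> truthM _ /ov3_gt0_ov2 ov_pos.
have := truthful_ov2_le (upd I i s') i (I i) truthM.
rewrite upd_upd upd_id upd_eq.
exact: lt_le_trans.
Qed.
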